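(* Let $(x_n)$ be a nonincreasing interval-filling sequence of positive reals with cardinal function $f$, and let $k\ge1$ be an integer such that $\#\{n\in\mathbb{N}: r_n>x_n\}\le k$. Then $f(x)\le 2^{k+1}$ for every $x\in\mathcal{A}((x_n))$ (in particular $f$ takes only finite values).
   Context: For a summable sequence $\mathbf{x}=(x_n)$ of positive reals, $\mathcal{A}(\mathbf{x})=\{\sum_{n\in A}x_n: A\subseteq\mathbb{N}\}$ is its achievement set and its cardinal function $f$ assigns to $x\in\mathcal{A}(\mathbf{x})$ the cardinality (a positive integer, $\omega$, or $\mathfrak{c}$) of $\{(\varepsilon_n)\in\{0,1\}^{\mathbb{N}}:\sum\varepsilon_nx_n=x\}$. The sequence is interval-filling if $\mathcal{A}(\mathbf{x})$ is an interval (equivalently $x_n\le r_n$ for all $n$). The tail sums are $r_n=\sum_{k=n+1}^\infty x_k$. *)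

From mathcomp Require Import all_boot all_order all_algebra.
From mathcomp Require Import all_classical all_reals all_analysis.
Set Implicit Arguments. Unset Strict Implicit. Unset Printing Implicit Defensive.
Import Order.TTheory GRing.Theory Num.Theory.
Import numFieldNormedType.Exports.
Local Open Scope classical_set_scope.
Local Open Scope ring_scope.

Definition summable_seq {R : realType} (x : R ^nat) : Prop := cvg (series x @ \oo).

(* Tail sums r_n = sum_{k >= n+1} x_k. *)
Definition tail_sum {R : realType} (x : R ^nat) (n : nat) : R :=
  limn (fun m => \sum_(n.+1 <= k < m) x k).

Definition represents {R : realType} (x : R ^nat) (eps : nat -> bool) (s : R)
  : Prop := series (fun n => (eps n)%:R * x n) @ \oo --> s.

Definition achievement_set {R : realType} (x : R ^nat) : set R :=
  [set s | exists eps : nat -> bool, represents x eps s].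

(* Set of codings of s: its cardinality is the cardinal function f(s). *)
Definition codings {R : realType} (x : R ^nat) (s : R) : set (nat -> bool) :=
  [set eps | represents x eps s].

Definition interval_filling {R : realType} (x : R ^nat) : Prop :=
  is_interval (achievement_set x).

From mathcomp Require Import all_boot all_order all_algebra.
From mathcomp Require Import all_classical all_reals all_analysis.
From mathcomp Require Import lra.
Import Order.TTheory GRing.Theory Num.Theory.
Import numFieldNormedType.Exports.
Local Open Scope classical_set_scope.
Local Open Scope ring_scope.

(* Let F be the set of indices with x_n < r_n. If two codings e, e' of s agree
   below their first difference n, with e_n = 1 and e'_n = 0, comparing the tails
   after n gives e_j x_j + (1 - e'_j) x_j <= r_n - x_n for every j > n. So if
   n is not in F, then e vanishes and e' equals 1 after n: one coding is finitely
   supported and the other is not. Hence a coding is determined by its values on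
   F together with the bit "finitely supported", which leaves at most 2^(k+1)
   codings. *)

Section tail_series.
Context {R : realType}.
Implicit Types (F : R ^nat) (L : R).

Lemma term_le_sum_nat F lo m j : (forall i, 0 <= F i) ->
  (lo <= j < m)%N -> F j <= \sum_(lo <= i < m) F i.
Proof.
move=> F0 /andP[loj jm].
rewrite (big_cat_nat loj (ltnW jm)) /= [X in _ + X]big_ltn //.
by rewrite ler_wpDl ?lerDl ?sumr_ge0.
Qed.

Lemma term_le_lim_tail F lo L j : (forall i, 0 <= F i) ->
  (fun m => \sum_(lo <= i < m) F i) @ \oo --> L -> (lo <= j)%N -> F j <= L.
Proof.
move=> F0 FL loj; apply: (cvgr_to_ge FL); near=> m.
apply: term_le_sum_nat => //; rewrite loj /=; near: m; exists j.+1 => //.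
Unshelve. all: by end_near.
Qed.

Lemma cvg_series_tail {F L} n : series F @ \oo --> L ->
  (fun m => \sum_(n <= i < m) F i) @ \oo --> L - \sum_(0 <= i < n) F i.
Proof.
move=> FL; apply: cvg_trans (cvgB FL (cvg_cst _)); apply: near_eq_cvg.
near=> m; rewrite -[RHS]sub_series_geq ?seriesEnat //; near: m; exists n.
Unshelve. all: by end_near.
Qed.

Lemma tail_sum_cvg {x : R ^nat} n : summable_seq x ->
  (fun m => \sum_(n.+1 <= i < m) x i) @ \oo --> tail_sum x n.
Proof.
move=> sx; have cvg_tail : cvgn [sequence \sum_(n.+1 <= i < m) x i]_m.
  by rewrite is_cvg_series_restrict.
exact: cvg_tail.
Qed.

End tail_series.

Lemma codings_first_difference (R : realType) (x : R ^nat) (e e' : nat -> bool) s n :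
  (forall i, 0 < x i) -> summable_seq x ->
  represents x e s -> represents x e' s ->
  (forall i, (i < n)%N -> e i = e' i) -> e n -> ~~ e' n ->
  tail_sum x n <= x n ->
  forall j, (n < j)%N -> ~~ e j /\ e' j.
Proof.
move=> xp sx rep_e rep_e' e_e' en e'n r_le_x j nj.
have digit_ge0 (b : bool) i : 0 <= b%:R * x i /\ 0 <= (1 - b%:R) * x i.
  by case: b; rewrite /= ?subrr ?subr0 ?mul0r ?mul1r lexx ltW.
set P := \sum_(0 <= i < n) (e i)%:R * x i.
have P_e' : \sum_(0 <= i < n) (e' i)%:R * x i = P.
  by apply: eq_big_nat => i /andP[_ /e_e' ->].
have tail_e : (fun m => \sum_(n.+1 <= i < m) (e i)%:R * x i) @ \oo --> s - P - x n.
  by have := cvg_series_tail n.+1 rep_e; rewrite big_nat_recr //= en mul1r opprD addrA.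
have tail_e' : (fun m => \sum_(n.+1 <= i < m) (e' i)%:R * x i) @ \oo --> s - P.
  have := cvg_series_tail n.+1 rep_e'.
  by rewrite big_nat_recr //= (negbTE e'n) mul0r addr0 P_e'.
have tail_gap : (fun m => \sum_(n.+1 <= i < m) (1 - (e' i)%:R) * x i) @ \oo
    --> tail_sum x n - (s - P).
  have -> : (fun m => \sum_(n.+1 <= i < m) (1 - (e' i)%:R) * x i) =
      (fun m => \sum_(n.+1 <= i < m) x i - \sum_(n.+1 <= i < m) (e' i)%:R * x i).
    by apply/funext => m; rewrite -sumrB; apply: eq_bigr => i _; rewrite mulrBl mul1r.
  exact: cvgB (tail_sum_cvg n sx) tail_e'.
have e_j_le : (e j)%:R * x j <= s - P - x n.
  by apply: term_le_lim_tail tail_e nj => i; case: (digit_ge0 (e i) i).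
have e'_j_le : (1 - (e' j)%:R) * x j <= tail_sum x n - (s - P).
  by apply: term_le_lim_tail tail_gap nj => i; case: (digit_ge0 (e' i) i).
have xj := xp j.
by move: e_j_le e'_j_le; case: (e j); case: (e' j) => /= le1 le2; split => //; lra.
Qed.

Lemma card_le_separated (T : pointedType) (A : set (T -> bool)) (F : set T)
    (b : (T -> bool) -> bool) k :
  (F #<= `I_k)%card ->
  (forall e e', A e -> A e' -> (forall t, F t -> e t = e' t) -> b e = b e' -> e = e') ->
  (A #<= `I_(2 ^ k.+1))%card.
Proof.
move=> /pcard_leP /injfunPex [g gF ginj] separated.
pose h (i : nat) : T := xget point [set t | F t /\ g t = i].
have hK t : F t -> h (g t) = t.
  move=> Ft.
  have [Fht ght] := xgetI point (P := [set u | F u /\ g u = g t]) (conj Ft erefl).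
  by apply: ginj; rewrite ?inE.
pose code (e : T -> bool) : {ffun 'I_k -> bool} * bool :=
  ([ffun i : 'I_k => e (h (val i))], b e).
apply/pcard_leP/injfunPex; exists (fun e => val (enum_rank (code e))).
  move=> e _ /=; rewrite -[X in (_ < X)%N](_ : #|{: {ffun 'I_k -> bool} * bool}| = _) //.
  by rewrite card_prod card_ffun card_bool card_ord expnSr.
move=> e e' /set_mem Ae /set_mem Ae' /val_inj /enum_rank_inj [eq_restr eq_b].
apply: separated => // t Ft.
have gtk : (g t < k)%N by exact: gF.
have := congr1 (fun f : {ffun 'I_k -> bool} => f (Ordinal gtk)) eq_restr.
by rewrite !ffunE /= hK.
Qed.

Definition finitely_supported (e : nat -> bool) : bool :=
  `[< exists N, forall i, (N < i)%N -> ~~ e i >].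

Lemma finitely_supported_neq (e e' : nat -> bool) n :
  (forall j, (n < j)%N -> ~~ e j /\ e' j) ->
  finitely_supported e != finitely_supported e'.
Proof.
move=> tails; have -> : finitely_supported e by apply/asboolP; exists n => i /tails[].
apply/eqP => /esym /asboolP [N e'N].
move: (tails (maxn N n).+1); rewrite ltnS leq_maxr => /(_ isT).
by case=> _; apply/negP; apply: e'N; rewrite ltnS leq_maxl.
Qed.

Lemma codings_separated (R : realType) (x : R ^nat) s :
  (forall i, 0 < x i) -> summable_seq x ->
  forall e e', codings x s e -> codings x s e' ->
  (forall n, x n < tail_sum x n -> e n = e' n) ->
  finitely_supported e = finitely_supported e' -> e = e'.
Proof.
move=> xp sx e e' rep_e rep_e' eq_dominant eq_fs.
apply/funext => i; apply: contrapT => ne_i.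
have ex_diff : exists n, e n != e' n by exists i; apply/eqP.
case: (ex_minnP ex_diff) => n ne_n n_min.
have e_e' j : (j < n)%N -> e j = e' j.
  by move=> jn; apply/eqP; apply: contraTT jn => /n_min; rewrite -leqNgt.
have r_le_x : tail_sum x n <= x n.
  by rewrite leNgt; apply: contra ne_n => /eq_dominant ->.
clear eq_dominant n_min ex_diff ne_i.
wlog en : e e' rep_e rep_e' e_e' ne_n eq_fs / e n.
  move=> sym; case/boolP: (e n) => [en|e'n]; first exact: (sym e e').
  have e'n' : e' n by move: ne_n; rewrite (negbTE e'n); case: (e' n).
  rewrite eq_sym in ne_n.
  by apply: (sym e' e rep_e' rep_e _ ne_n (esym eq_fs)) => // j /e_e'.
suff /finitely_supported_neq : forall j, (n < j)%N -> ~~ e j /\ e' j.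
  by rewrite eq_fs eqxx.
have e'n : ~~ e' n by move: ne_n; rewrite en; case: (e' n).
exact: codings_first_difference xp sx rep_e rep_e' e_e' en e'n r_le_x.
Qed.

Theorem theorem4p11 (R : realType) (x : R ^nat) (k : nat) :
  (forall n, 0 < x n) ->
  summable_seq x ->
  (forall n, x n.+1 <= x n) ->
  interval_filling x ->
  (1 <= k)%N ->
  ([set n | x n < tail_sum x n] #<= `I_k)%card ->
  forall s, achievement_set x s ->
    (codings x s #<= `I_(2 ^ k.+1))%card.
Proof.
move=> xp sx _ _ _ dominant_le_k s _.
apply: card_le_separated dominant_le_k _ => e e' rep_e rep_e'.
exact: codings_separated xp sx e e' rep_e rep_e'.
Qed.
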